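(* Let $\Gamma>0$ be an ordinal, $\mathcal{M}=(W,R,V)$ a Kripke model, $w_0\in W$, and $\varphi_0$ a sentence of the modal $\mu$-calculus in normal form. Then $\mathcal{M},w_0\vDash^\Gamma\varphi_0$ if and only if $\mathcal{M},w_0\Vdash^\Gamma\varphi_0$, i.e. $\varphi_0$ is true at $w_0$ under $\Gamma$-bounded compositional semantics iff Eloise has a winning strategy in the $\Gamma$-bounded evaluation game $(\mathcal{M},w_0,\varphi_0,\Gamma)$.
   Context: Formulae of the modal $\mu$-calculus over proposition symbols $\Phi$ and label symbols $\Lambda$: $\varphi ::= p \mid \neg p \mid X \mid \varphi\vee\varphi \mid \varphi\wedge\varphi \mid \Diamond\varphi \mid \Box\varphi \mid \mu X\varphi \mid \nu X\varphi$. $\mathrm{Sub}(\varphi)$ is the set of occurrences (nodes of the syntax tree); $\mathrm{Sub}_{\mu\nu}(\varphi)$ those of form $\mu X\psi$ or $\nu X\psi$. A sentence has no free label occurrences. Normal form: each label symbol occurs at most once in a $\mu$- or $\nu$-operator. For an atomic occurrence $X$ in a sentence $\varphi_0$, $\mathrm{rf}(X)$ is the nearest ancestor occurrence of the form $\mu X\psi$ or $\nu X\psi$. $\Gamma$-bounded compositional semantics ($\mathcal{M}=(W,R,V)$, assignment $s:\Lambda\to\mathcal{P}(W)$): $\mathcal{M},w\vDash^\Gamma_s p$ iff $w\in V(p)$; $\neg p$ iff $w\notin V(p)$; $X$ iff $w\in s(X)$; $\vee,\wedge$ as usual; $\Diamond\psi$ iff some $v$ with $wRv$ satisfies $\psi$;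 $\Box\psi$ iff all $v$ with $wRv$ satisfy $\psi$; $\mathcal{M},w\vDash^\Gamma_s\mu X\psi$ iff $w\in F^\Gamma_\mu$ and $\mathcal{M},w\vDash^\Gamma_s\nu X\psi$ iff $w\in F^\Gamma_\nu$, where $F(A)=\{v\in W\mid\mathcal{M},v\vDash^\Gamma_{s[A/X]}\psi\}$ ($s[A/X]$ agrees with $s$ except $X\mapsto A$), and for $F:\mathcal{P}(W)\to\mathcal{P}(W)$: $F^0_\mu=\emptyset$, $F^{\beta+1}_\mu=F(F^\beta_\mu)$, $F^\lambda_\mu=\bigcup_{\delta<\lambda}F^\delta_\mu$ ($\lambda$ limit); $F^0_\nu=W$, $F^{\beta+1}_\nu=F(F^\beta_\nu)$, $F^\lambda_\nu=\bigcap_{\delta<\lambda}F^\delta_\nu$ ($\lambda$ limit). For a sentence truth does not depend on $s$, written $\mathcal{M},w\vDash^\Gamma\varphi$. The $\Gamma$-bounded evaluation game $(\mathcal{M},w_0,\varphi_0,\Gamma)$: players Eloise and Abelard; positions $(w,\varphi,c)$ with $w\in W$, $\varphi\in\mathrm{Sub}(\varphi_0)$, $c:\mathrm{Sub}_{\mu\nu}(\varphi_0)\to\{\gamma\mid\gamma\le\Gamma\}$; initial position $(w_0,\varphi_0,c_0)$ with $c_0\equiv\Gamma$. Rules: at $(w,p,c)$ Eloise wins iff $w\in V(p)$, else Abelard wins; at $(w,\neg p,c)$ Eloise wins iff $w\notin V(p)$, else Abelard; at $(w,\psi\vee\theta,c)$ Eloise picks $(w,\psi,c)$ or $(w,\theta,c)$;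 at $(w,\psi\wedge\theta,c)$ Abelard picks; at $(w,\Diamond\psi,c)$ Eloise picks $v$ with $wRv$, next $(v,\psi,c)$, and Abelard wins if there is none; at $(w,\Box\psi,c)$ Abelard picks $v$ with $wRv$, next $(v,\psi,c)$, and Eloise wins if there is none; at $(w,\mu X\psi,c)$ Eloise picks $\gamma<\Gamma$, next $(w,\psi,c[\gamma/\mu X\psi])$; at $(w,\nu X\psi,c)$ Abelard picks $\gamma<\Gamma$, next $(w,\psi,c[\gamma/\nu X\psi])$. At $(w,X,c)$ with $\gamma=c(\mathrm{rf}(X))$: if $\mathrm{rf}(X)=\mu X\psi$, then Abelard wins if $\gamma=0$, otherwise Eloise picks $\gamma'<\gamma$ and play moves to $(w,\psi,c')$ with $c'(\mu X\psi)=\gamma'$, $c'(\theta)=\Gamma$ for all $\theta\in\mathrm{Sub}_{\mu\nu}(\varphi_0)$ occurring inside $\psi$, and $c'(\theta)=c(\theta)$ otherwise; if $\mathrm{rf}(X)=\nu X\psi$, symmetrically Eloise wins if $\gamma=0$, otherwise Abelard picks $\gamma'<\gamma$ with the same clock update. A strategy for Eloise is a partial function on positions giving her choice at each position where she must move; it is winning if she can always follow it and wins every play in which she follows it. $\mathcal{M},w_0\Vdash^\Gamma\varphi_0$ iff Eloise has a winning strategy in $(\mathcal{M},w_0,\varphi_0,\Gamma)$. *)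

From Stdlib Require Import List Bool.
Import ListNotations.
Set Implicit Arguments.

(* ---------- Ordinals <= Gamma ----------
   An ordinal Gamma is represented by the well-ordered set of all ordinals
   gamma <= Gamma: a strict well-founded total order with a greatest element
   [top] (= Gamma).  Every well-order with a maximum is isomorphic to
   {gamma | gamma <= Gamma} for a unique ordinal Gamma, and conversely. *)
Record ordinal_upto := {
  ord :> Type;
  olt : ord -> ord -> Prop;
  olt_wf : well_founded olt;
  olt_trans : forall a b c, olt a b -> olt b c -> olt a c;
  olt_total : forall a b, olt a b \/ a = b \/ olt b a;
  top : ord;
  top_max : forall a, a = top \/ olt a top
}.

Section Iteration.
Variable G : ordinal_upto.
Variable W : Type.
Variable F : (W -> Prop) -> (W -> Prop).

Definition is_pred (b g : G) : Prop :=
  olt G b g /\ forall d, olt G d g -> ~ olt G b d.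

(* F^gamma_mu: F^0 = empty, F^(beta+1) = F(F^beta), F^lambda = U_{delta<lambda} F^delta.
   (0 and limits have no immediate predecessor; for 0 the union is empty.) *)
Definition iter_mu : G -> W -> Prop :=
  Fix (olt_wf G) (fun _ => W -> Prop)
    (fun g rec w =>
       (exists b (h : olt G b g), is_pred b g /\ F (rec b h) w) \/
       ((~ exists b, is_pred b g) /\ exists d (h : olt G d g), rec d h w)).

(* F^gamma_nu: F^0 = W, F^(beta+1) = F(F^beta), F^lambda = /\_{delta<lambda} F^delta. *)
Definition iter_nu : G -> W -> Prop :=
  Fix (olt_wf G) (fun _ => W -> Prop)
    (fun g rec w =>
       (exists b (h : olt G b g), is_pred b g /\ F (rec b h) w) \/
       ((~ exists b, is_pred b g) /\ forall d (h : olt G d g), rec d h w)).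
End Iteration.

Inductive form (P L : Type) : Type :=
| FProp : P -> form P L
| FNProp : P -> form P L
| FVar : L -> form P L
| FOr : form P L -> form P L -> form P L
| FAnd : form P L -> form P L -> form P L
| FDia : form P L -> form P L
| FBox : form P L -> form P L
| FMu : L -> form P L -> form P L
| FNu : L -> form P L -> form P L.
Arguments FProp {P L}. Arguments FNProp {P L}. Arguments FVar {P L}.
Arguments FOr {P L}. Arguments FAnd {P L}. Arguments FDia {P L}.
Arguments FBox {P L}. Arguments FMu {P L}. Arguments FNu {P L}.

(* Occurrences (nodes of the syntax tree) are addressed by paths from the root;
   false = left/only child, true = right child. *)
Definition path := list bool.

Fixpoint subf {P L} (phi : form P L) (p : path) : option (form P L) :=
  match p with
  | [] => Some phi
  | b :: p' =>
    match phi with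
    | FOr a c | FAnd a c => subf (if b then c else a) p'
    | FDia a | FBox a | FMu _ a | FNu _ a => if b then None else subf a p'
    | _ => None
    end
  end.

Fixpoint free_in {P L} (X : L) (phi : form P L) : Prop :=
  match phi with
  | FProp _ | FNProp _ => False
  | FVar Y => Y = X
  | FOr a b | FAnd a b => free_in X a \/ free_in X b
  | FDia a | FBox a => free_in X a
  | FMu Y a | FNu Y a => Y <> X /\ free_in X a
  end.

Definition sentence {P L} (phi : form P L) : Prop := forall X, ~ free_in X phi.

Definition binds {P L} (phi0 : form P L) (p : path) (X : L) : Prop :=
  exists a, subf phi0 p = Some (FMu X a) \/ subf phi0 p = Some (FNu X a).

Definition normal_form {P L} (phi0 : form P L) : Prop :=
  forall X p1 p2, binds phi0 p1 X -> binds phi0 p2 X -> p1 = p2.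

(* rf: pb is the nearest ancestor of the atomic occurrence p (labelled X)
   of the form muX psi or nuX psi *)
Definition rf {P L} (phi0 : form P L) (p pb : path) : Prop :=
  exists X, subf phi0 p = Some (FVar X) /\ binds phi0 pb X /\
    (exists s, p = pb ++ s) /\
    forall s1 s2, p = pb ++ s1 ++ s2 -> s1 <> [] -> ~ binds phi0 (pb ++ s1) X.

Definition upd {L W} (s : L -> W -> Prop) (X : L) (A : W -> Prop) : L -> W -> Prop :=
  fun Y w => (Y = X /\ A w) \/ (Y <> X /\ s Y w).

Fixpoint sem (G : ordinal_upto) {P L W : Type} (R : W -> W -> Prop) (V : P -> W -> Prop)
  (phi : form P L) (s : L -> W -> Prop) : W -> Prop :=
  match phi with
  | FProp p => fun w => V p w
  | FNProp p => fun w => ~ V p w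
  | FVar X => s X
  | FOr a b => fun w => sem G R V a s w \/ sem G R V b s w
  | FAnd a b => fun w => sem G R V a s w /\ sem G R V b s w
  | FDia a => fun w => exists v, R w v /\ sem G R V a s v
  | FBox a => fun w => forall v, R w v -> sem G R V a s v
  | FMu X a => iter_mu G (fun A => sem G R V a (upd s X A)) (top G)
  | FNu X a => iter_nu G (fun A => sem G R V a (upd s X A)) (top G)
  end.

(* M, w |=^Gamma phi0 for a sentence phi0 (truth is independent of s) *)
Definition sem_holds (G : ordinal_upto) {P L W : Type} (R : W -> W -> Prop)
  (V : P -> W -> Prop) (phi0 : form P L) (w : W) : Prop :=
  forall s, sem G R V phi0 s w.

Fixpoint prefixb (p q : path) : bool :=
  match p, q with
  | [], _ => true
  | b :: p', c :: q' => Bool.eqb b c && prefixb p' q'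
  | _ :: _, [] => false
  end.

Definition is_mu_nu {P L} (o : option (form P L)) : bool :=
  match o with Some (FMu _ _) | Some (FNu _ _) => true | _ => false end.

Section Game.
Variable G : ordinal_upto.
Variables P L W : Type.
Variable R : W -> W -> Prop.
Variable V : P -> W -> Prop.
Variable phi0 : form P L.

(* clocks: only their values on mu/nu-occurrences matter *)
Definition clock := path -> G.

Record pos := Pos { pw : W; pocc : path; pclk : clock }.

Definition set_clock (c : clock) (p : path) (g : G) : clock :=
  fun q => if list_eq_dec bool_dec q p then g else c q.

Definition reset_clock (c : clock) (pb : path) (g : G) : clock :=
  fun q => if prefixb (pb ++ [false]) q && is_mu_nu (subf phi0 q) then top G
           else set_clock c pb g q.

Definition is_zero (g : G) : Prop := forall d, ~ olt G d g.

Inductive choice :=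
| ChLeft | ChRight | ChWorld (v : W) | ChOrd (g : G).

Definition strategy := pos -> option choice.

(* win sigma p : sigma is winning for Eloise from position p, i.e. she can
   always follow sigma and every play from p following sigma is finite and
   won by her (inductive = well-founded play tree). *)
Inductive win (sigma : strategy) : pos -> Prop :=
| win_prop : forall w p c q, subf phi0 p = Some (FProp q) -> V q w ->
    win sigma (Pos w p c)
| win_nprop : forall w p c q, subf phi0 p = Some (FNProp q) -> ~ V q w ->
    win sigma (Pos w p c)
| win_or_l : forall w p c a b, subf phi0 p = Some (FOr a b) ->
    sigma (Pos w p c) = Some ChLeft -> win sigma (Pos w (p ++ [false]) c) ->
    win sigma (Pos w p c)
| win_or_r : forall w p c a b, subf phi0 p = Some (FOr a b) ->
    sigma (Pos w p c) = Some ChRight -> win sigma (Pos w (p ++ [true]) c) ->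
    win sigma (Pos w p c)
| win_and : forall w p c a b, subf phi0 p = Some (FAnd a b) ->
    win sigma (Pos w (p ++ [false]) c) -> win sigma (Pos w (p ++ [true]) c) ->
    win sigma (Pos w p c)
| win_dia : forall w p c a v, subf phi0 p = Some (FDia a) ->
    sigma (Pos w p c) = Some (ChWorld v) -> R w v ->
    win sigma (Pos v (p ++ [false]) c) -> win sigma (Pos w p c)
| win_box : forall w p c a, subf phi0 p = Some (FBox a) ->
    (forall v, R w v -> win sigma (Pos v (p ++ [false]) c)) ->
    win sigma (Pos w p c)
| win_mu : forall w p c X a g, subf phi0 p = Some (FMu X a) ->
    sigma (Pos w p c) = Some (ChOrd g) -> olt G g (top G) ->
    win sigma (Pos w (p ++ [false]) (set_clock c p g)) -> win sigma (Pos w p c)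
| win_nu : forall w p c X a, subf phi0 p = Some (FNu X a) ->
    (forall g, olt G g (top G) -> win sigma (Pos w (p ++ [false]) (set_clock c p g))) ->
    win sigma (Pos w p c)
| win_var_mu : forall w p c pb X a g, rf phi0 p pb -> subf phi0 pb = Some (FMu X a) ->
    sigma (Pos w p c) = Some (ChOrd g) -> olt G g (c pb) ->
    win sigma (Pos w (pb ++ [false]) (reset_clock c pb g)) -> win sigma (Pos w p c)
| win_var_nu : forall w p c pb X a, rf phi0 p pb -> subf phi0 pb = Some (FNu X a) ->
    (forall g, olt G g (c pb) -> win sigma (Pos w (pb ++ [false]) (reset_clock c pb g))) ->
    win sigma (Pos w p c).

Definition game_holds (w0 : W) : Prop :=
  exists sigma : strategy, win sigma (Pos w0 [] (fun _ => top G)).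
End Game.

(* A position (w, p, c) of the bounded game is read as the claim that the
   subformula at occurrence p holds at w, in the environment where each
   variable bound above p denotes the approximant of its fixpoint indexed by
   the clock of its binder.  Every rule of the game preserves this reading:
   Eloise's moves pick witnesses of the existential unfoldings (a disjunct, a
   successor, an ordinal below the clock at which the least-fixpoint
   approximant is reached) and Abelard's moves range over the universal ones.
   So a winning strategy certifies truth, and conversely the strategy "always
   move to a true position" wins because every play of the bounded game is
   finite: a variable sends the play back to its binder with a strictly smaller
   clock there, while the clocks above that binder are unchanged. *)

From Pilot Require Import Defs.
From Stdlib Require Import List Bool Lia Classical ClassicalEpsilon FunctionalExtensionality.
Import ListNotations.
Set Implicit Arguments.

(** * Ordinal approximants *)

Definition subset {W : Type} (A B : W -> Prop) : Prop := forall w, A w -> B w.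

Definition monotone {W : Type} (F : (W -> Prop) -> W -> Prop) : Prop :=
  forall A B, subset A B -> subset (F A) (F B).

Lemma lt_pred_le {G : ordinal_upto} {b g h : G} :
  is_pred G b g -> olt G h g -> h = b \/ olt G h b.
Proof.
  intros [_ Hmax] Hh.
  destruct (olt_total G h b) as [Hhb | [-> | Hbh]]; auto.
  exfalso; exact (Hmax h Hh Hbh).
Qed.

Lemma lt_not_pred_between {G : ordinal_upto} {h g : G} :
  olt G h g -> ~ is_pred G h g -> exists d, olt G h d /\ olt G d g.
Proof.
  intros Hh Hnp. apply NNPP; intro Hno. apply Hnp. split; [exact Hh |].
  intros d Hd Hhd. apply Hno. eauto.
Qed.

Section Iteration.
Variable G : ordinal_upto.
Variable W : Type.
Variable F : (W -> Prop) -> W -> Prop.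
Hypothesis F_mono : monotone F.

Lemma iter_mu_unfold g w :
  iter_mu G F g w <->
  (exists b, is_pred G b g /\ F (iter_mu G F b) w) \/
  ((~ exists b, is_pred G b g) /\ exists d, olt G d g /\ iter_mu G F d w).
Proof.
  unfold iter_mu at 1; rewrite Fix_eq.
  - split.
    + intros [[b [_ [Hb Hw]]] | [Hnp [d [Hd Hw]]]]; [left | right]; eauto.
    + intros [[b [Hb Hw]] | [Hnp [d [Hd Hw]]]]; [left | right];
        [exists b, (proj1 Hb) | split; [| exists d, Hd]]; auto.
  - intros g' f f' Hf. replace f' with f; [reflexivity |].
    extensionality d; extensionality h; apply Hf.
Qed.

Lemma iter_nu_unfold g w :
  iter_nu G F g w <->
  (exists b, is_pred G b g /\ F (iter_nu G F b) w) \/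
  ((~ exists b, is_pred G b g) /\ forall d, olt G d g -> iter_nu G F d w).
Proof.
  unfold iter_nu at 1; rewrite Fix_eq.
  - split.
    + intros [[b [_ [Hb Hw]]] | [Hnp Hw]]; [left | right]; eauto.
    + intros [[b [Hb Hw]] | [Hnp Hw]]; [left | right];
        [exists b, (proj1 Hb) | split]; auto.
  - intros g' f f' Hf. replace f' with f; [reflexivity |].
    extensionality d; extensionality h; apply Hf.
Qed.

(* The characterisation and the monotonicity of the approximants have to be
   proved simultaneously: each case of one uses the other below [g]. *)
Lemma iter_mu_char_mono g :
  (forall w, iter_mu G F g w <-> exists h, olt G h g /\ F (iter_mu G F h) w) /\
  (forall h, olt G h g -> subset (iter_mu G F h) (iter_mu G F g)).
Proof.
  induction g as [g IH] using (well_founded_ind (olt_wf G)).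
  assert (Hchar : forall w, iter_mu G F g w <-> exists h, olt G h g /\ F (iter_mu G F h) w).
  { intro w; rewrite iter_mu_unfold.
    destruct (classic (exists b, is_pred G b g)) as [[b Hb] | Hnp]; split.
    - intros [[b' [Hb' Hw]] | [Hnp _]]; [exists b'; split; [apply Hb' | exact Hw] |].
      exfalso; eauto.
    - intros [h [Hh Hw]]. left; exists b; split; [exact Hb |].
      destruct (lt_pred_le Hb Hh) as [-> | Hhb]; [exact Hw |].
      exact (F_mono (proj2 (IH b (proj1 Hb)) h Hhb) Hw).
    - intros [[b [Hb _]] | [_ [d [Hd Hw]]]]; [exfalso; eauto |].
      apply (proj1 (IH d Hd)) in Hw; destruct Hw as [h [Hh Hw]].
      exists h; split; [exact (olt_trans G _ _ _ Hh Hd) | exact Hw].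
    - intros [h [Hh Hw]]. right; split; [exact Hnp |].
      assert (Hnph : ~ is_pred G h g) by (intro; apply Hnp; eauto).
      destruct (lt_not_pred_between Hh Hnph) as [d [Hhd Hd]].
      exists d; split; [exact Hd |]. apply (proj1 (IH d Hd)); eauto. }
  split; [exact Hchar |].
  intros h Hh w Hw. apply (proj1 (IH h Hh)) in Hw; destruct Hw as [k [Hk Hw]].
  apply Hchar; exists k; split; [exact (olt_trans G _ _ _ Hk Hh) | exact Hw].
Qed.

Lemma iter_mu_char g w :
  iter_mu G F g w <-> exists h, olt G h g /\ F (iter_mu G F h) w.
Proof. apply iter_mu_char_mono. Qed.

Lemma iter_nu_char_anti g :
  (forall w, iter_nu G F g w <-> forall h, olt G h g -> F (iter_nu G F h) w) /\
  (forall h, olt G h g -> subset (iter_nu G F g) (iter_nu G F h)).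
Proof.
  induction g as [g IH] using (well_founded_ind (olt_wf G)).
  assert (Hchar : forall w, iter_nu G F g w <-> forall h, olt G h g -> F (iter_nu G F h) w).
  { intro w; rewrite iter_nu_unfold.
    destruct (classic (exists b, is_pred G b g)) as [[b Hb] | Hnp]; split.
    - intros [[b' [Hb' Hw]] | [Hnp _]] h Hh; [| exfalso; eauto].
      destruct (lt_pred_le Hb' Hh) as [-> | Hhb]; [exact Hw |].
      exact (F_mono (proj2 (IH b' (proj1 Hb')) h Hhb) Hw).
    - intro Hw. left; exists b; split; [exact Hb | exact (Hw b (proj1 Hb))].
    - intros [[b [Hb _]] | [_ Hw]] h Hh; [exfalso; eauto |].
      assert (Hnph : ~ is_pred G h g) by (intro; apply Hnp; eauto).
      destruct (lt_not_pred_between Hh Hnph) as [d [Hhd Hd]].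
      exact (proj1 (proj1 (IH d Hd) w) (Hw d Hd) h Hhd).
    - intro Hw. right; split; [exact Hnp |].
      intros d Hd. apply (proj1 (IH d Hd)).
      intros h Hh. exact (Hw h (olt_trans G _ _ _ Hh Hd)). }
  split; [exact Hchar |].
  intros h Hh w Hw. apply (proj1 (IH h Hh)).
  intros k Hk. exact (proj1 (Hchar w) Hw k (olt_trans G _ _ _ Hk Hh)).
Qed.

Lemma iter_nu_char g w :
  iter_nu G F g w <-> forall h, olt G h g -> F (iter_nu G F h) w.
Proof. apply iter_nu_char_anti. Qed.

End Iteration.

Section IterationMonotone.
Variable G : ordinal_upto.
Variable W : Type.
Variables F F' : (W -> Prop) -> W -> Prop.
Hypothesis F_mono : monotone F.
Hypothesis F'_mono : monotone F'.
Hypothesis F_le : forall A B, subset A B -> subset (F A) (F' B).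

Lemma iter_mu_le g : subset (iter_mu G F g) (iter_mu G F' g).
Proof.
  induction g as [g IH] using (well_founded_ind (olt_wf G)).
  intros w Hw. rewrite (iter_mu_char G F_mono) in Hw; apply (iter_mu_char G F'_mono).
  destruct Hw as [h [Hh Hw]]. exists h; split; [exact Hh | exact (F_le (IH h Hh) Hw)].
Qed.

Lemma iter_nu_le g : subset (iter_nu G F g) (iter_nu G F' g).
Proof.
  induction g as [g IH] using (well_founded_ind (olt_wf G)).
  intros w Hw. rewrite (iter_nu_char G F_mono) in Hw; apply (iter_nu_char G F'_mono).
  intros h Hh. exact (F_le (IH h Hh) (Hw h Hh)).
Qed.

End IterationMonotone.

(** * Occurrences and their environments *)

Definition sprefix (r p : path) : Prop := exists t, p = r ++ t /\ t <> [].

Lemma sprefix_length {r p} : sprefix r p -> length r < length p.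
Proof. intros [t [-> Ht]]. rewrite length_app. destruct t; [congruence | simpl; lia]. Qed.

Lemma sprefix_snoc {r p} b : sprefix r p -> sprefix r (p ++ [b]).
Proof.
  intros [t [-> Ht]]. exists (t ++ [b]). rewrite app_assoc.
  split; [reflexivity | destruct t; simpl; congruence].
Qed.

Lemma sprefix_snoc_self p b : sprefix p (p ++ [b]).
Proof. exists [b]; split; [reflexivity | discriminate]. Qed.

Lemma sprefix_snoc_inv {r p b} : sprefix r (p ++ [b]) -> r = p \/ sprefix r p.
Proof.
  intros [t [Ht Hne]]. destruct t as [| x t] using rev_ind; [congruence |].
  rewrite app_assoc in Ht. apply app_inj_tail in Ht as [-> _].
  destruct t as [| y t]; [left; symmetry; apply app_nil_r | right].
  exists (y :: t); split; [reflexivity | discriminate].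
Qed.

Lemma subf_nil {P L} (phi : form P L) : subf phi [] = Some phi.
Proof. destruct phi; reflexivity. Qed.

Lemma subf_app {P L} (phi : form P L) p q :
  subf phi (p ++ q) = match subf phi p with Some psi => subf psi q | None => None end.
Proof.
  revert phi; induction p as [| b p IH]; intro phi; [destruct phi; reflexivity |].
  destruct phi; simpl; auto; destruct b; simpl; auto.
Qed.

Lemma subf_snoc {P L} {phi psi : form P L} {p} b :
  subf phi p = Some psi -> subf phi (p ++ [b]) = subf psi [b].
Proof. intro H. rewrite subf_app, H. reflexivity. Qed.

Lemma upd_eq {L W} (e : L -> W -> Prop) X A w : upd e X A X w <-> A w.
Proof. unfold upd; intuition congruence. Qed.

Lemma upd_neq {L W} (e : L -> W -> Prop) X A Y w : Y <> X -> (upd e X A Y w <-> e Y w).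
Proof. unfold upd; intuition congruence. Qed.

Lemma upd_le {L W} (e e' : L -> W -> Prop) X A B :
  (forall Y, subset (e Y) (e' Y)) -> subset A B ->
  forall Y, subset (upd e X A Y) (upd e' X B Y).
Proof. intros He HA Y w [[-> Hw] | [HY Hw]]; [left | right]; split; auto; apply He, Hw. Qed.

Section Semantics.
Variable G : ordinal_upto.
Variables P L W : Type.
Variable R : W -> W -> Prop.
Variable V : P -> W -> Prop.

Definition body (e : L -> W -> Prop) (X : L) (a : form P L) : (W -> Prop) -> W -> Prop :=
  fun A => sem G R V a (upd e X A).

Lemma sem_le (phi : form P L) : forall e e' : L -> W -> Prop,
  (forall Y, subset (e Y) (e' Y)) -> subset (sem G R V phi e) (sem G R V phi e').
Proof.
  induction phi as [| | | a IHa b IHb | a IHa b IHb | a IHa | a IHa | X a IHa | X a IHa];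
    intros e e' He w; unfold subset in *; simpl; auto.
  - intros [Hw | Hw]; [left | right]; eauto.
  - intros [Hwa Hwb]; split; eauto.
  - intros [v [Hv Hw]]; eauto.
  - intros Hw v Hv; eauto.
  - apply iter_mu_le; intros A B HAB w'; apply IHa, upd_le; auto; intros Y v; auto.
  - apply iter_nu_le; intros A B HAB w'; apply IHa, upd_le; auto; intros Y v; auto.
Qed.

Lemma body_monotone e X a : monotone (body e X a).
Proof. intros A B HAB. apply sem_le, upd_le; [intros Y w; auto | exact HAB]. Qed.

Fixpoint occ_env (phi : form P L) (p : path) (c : path -> G) (e : L -> W -> Prop)
  {struct p} : L -> W -> Prop :=
  match p with
  | [] => e
  | b :: p' =>
    let c' := fun q => c (b :: q) in
    match phi with
    | FOr a d | FAnd a d => occ_env (if b then d else a) p' c' e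
    | FDia a | FBox a => occ_env a p' c' e
    | FMu X a => occ_env a p' c' (upd e X (iter_mu G (body e X a) (c [])))
    | FNu X a => occ_env a p' c' (upd e X (iter_nu G (body e X a) (c [])))
    | _ => e
    end
  end.

Lemma occ_env_snoc p : forall (phi psi : form P L) c e b,
  subf phi p = Some psi ->
  occ_env phi (p ++ [b]) c e = occ_env psi [b] (fun q => c (p ++ q)) (occ_env phi p c e).
Proof.
  induction p as [| x p IH]; intros phi psi c e b H.
  - rewrite subf_nil in H; injection H as <-; reflexivity.
  - destruct phi; simpl in H |- *; try discriminate;
      try (destruct x; [discriminate |]); exact (IH _ _ _ _ b H).
Qed.

Lemma occ_env_agree p : forall (phi : form P L) c c' e,
  (forall r, sprefix r p -> c r = c' r) -> occ_env phi p c e = occ_env phi p c' e.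
Proof.
  induction p as [| x p IH]; intros phi c c' e H; [reflexivity |].
  assert (H0 : c [] = c' []).
  { apply H. exists (x :: p); split; [reflexivity | discriminate]. }
  assert (Hx : forall r, sprefix r p -> c (x :: r) = c' (x :: r)).
  { intros r [t [-> Ht]]. apply H. exists t; split; auto. }
  destruct phi; simpl; try rewrite H0; auto.
Qed.

Lemma occ_env_skip (phi : form P L) c e Y q t :
  subf phi (q ++ t) <> None ->
  (forall t1, sprefix t1 t -> ~ binds phi (q ++ t1) Y) ->
  forall w, occ_env phi (q ++ t) c e Y w <-> occ_env phi q c e Y w.
Proof.
  induction t as [| x t IH] using rev_ind; intros Hocc Hfree w.
  - rewrite app_nil_r; reflexivity.
  - rewrite app_assoc in Hocc |- *. rewrite subf_app in Hocc.
    destruct (subf phi (q ++ t)) as [psi |] eqn:Hpsi; [| congruence].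
    rewrite <- (IH ltac:(congruence) (fun t1 H => Hfree t1 (sprefix_snoc x H))).
    rewrite (occ_env_snoc _ _ _ _ x Hpsi).
    destruct psi; try reflexivity; simpl; apply upd_neq; intros ->;
      apply (Hfree t (sprefix_snoc_self t x)); eexists; eauto.
Qed.

End Semantics.

Section Occurrences.
Variables P L : Type.
Implicit Types (phi chi : form P L) (X : L).

Lemma subf_cons_child phi b p :
  subf phi (b :: p) <> None -> exists chi, subf phi [b] = Some chi.
Proof. destruct phi, b; simpl; try congruence; eexists; apply subf_nil. Qed.

Lemma subf_cons {phi chi b} r : subf phi [b] = Some chi -> subf phi (b :: r) = subf chi r.
Proof. intro H. change (b :: r) with ([b] ++ r). rewrite subf_app, H. reflexivity. Qed.

Lemma binds_cons {phi chi b} r X :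
  subf phi [b] = Some chi -> binds phi (b :: r) X <-> binds chi r X.
Proof. intro H. unfold binds. rewrite (subf_cons r H). reflexivity. Qed.

Lemma free_in_child {phi chi b X} :
  subf phi [b] = Some chi -> ~ binds phi [] X -> free_in X chi -> free_in X phi.
Proof.
  intros H Hnb Hfree.
  destruct phi, b; simpl in H |- *; rewrite ?subf_nil in H; try discriminate;
    injection H as <-; auto.
  all: split; [intros ->; apply Hnb; eexists; simpl; auto | exact Hfree].
Qed.

Definition unbound_occ phi p X : Prop := forall t1 t2, p = t1 ++ t2 -> ~ binds phi t1 X.

Lemma var_unbound_or_rf p : forall phi X, subf phi p = Some (FVar X) ->
  (unbound_occ phi p X /\ free_in X phi) \/ exists pb, rf phi p pb.
Proof.
  induction p as [| b p IH]; intros phi X Hp.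
  - rewrite subf_nil in Hp; injection Hp as ->. left; split; [| reflexivity].
    intros [| ? ?] t2 E [a [Ha | Ha]]; discriminate.
  - destruct (subf_cons_child phi b p ltac:(congruence)) as [chi Hchi].
    rewrite (subf_cons p Hchi) in Hp.
    destruct (IH chi X Hp) as [[Hunb Hfree] | [pb [Y [HY [Hpb [[s Hs] Hmin]]]]]].
    + destruct (classic (binds phi [] X)) as [Hroot | Hroot].
      * right; exists [], X. rewrite (subf_cons p Hchi).
        repeat split; auto; [exists (b :: p); reflexivity |].
        intros [| x s1] s2 E Hne; [congruence |]. injection E as <- E.
        simpl; rewrite (binds_cons _ _ Hchi). exact (Hunb s1 s2 E).
      * left; split; [| exact (free_in_child Hchi Hroot Hfree)].
        intros [| x s1] s2 E; [exact Hroot |]. injection E as <- E.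
        rewrite (binds_cons _ _ Hchi). exact (Hunb s1 s2 E).
    + right; exists (b :: pb), Y. rewrite (subf_cons p Hchi), (binds_cons _ _ Hchi).
      repeat split; auto; [exists s; simpl; congruence |].
      intros s1 s2 E Hne. simpl in E; injection E as E.
      simpl; rewrite (binds_cons _ _ Hchi). exact (Hmin s1 s2 E Hne).
Qed.

Lemma sentence_var_rf phi p X :
  sentence phi -> subf phi p = Some (FVar X) -> exists pb, rf phi p pb.
Proof.
  intros Hsent Hp. destruct (var_unbound_or_rf p phi Hp) as [[_ Hfree] | Hrf];
    [exfalso; exact (Hsent X Hfree) | exact Hrf].
Qed.

Lemma rf_shape phi q pb : rf phi q pb ->
  exists X t, subf phi q = Some (FVar X) /\ binds phi pb X /\ q = pb ++ false :: t /\
    forall t1, sprefix t1 t -> ~ binds phi (pb ++ false :: t1) X.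
Proof.
  intros [X [Hq [Hpb [[s ->] Hmin]]]]. exists X.
  assert (Hs : exists t, s = false :: t).
  { destruct Hpb as [a Ha]; rewrite subf_app in Hq.
    destruct s as [| [|] t]; [| | eauto]; destruct Ha as [Ha | Ha]; rewrite Ha in Hq;
      simpl in Hq; rewrite ?subf_nil in Hq; discriminate. }
  destruct Hs as [t ->]. exists t; repeat split; auto.
  intros t1 [t2 [-> Ht2]]. apply (Hmin (false :: t1) t2); [reflexivity | discriminate].
Qed.

Lemma rf_sprefix phi q pb : rf phi q pb -> sprefix pb q.
Proof.
  intro H. destruct (rf_shape H) as [X [t [_ [_ [-> _]]]]].
  exists (false :: t); split; [reflexivity | discriminate].
Qed.

Lemma rf_functional phi q pb pb' : rf phi q pb -> rf phi q pb' -> pb = pb'.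
Proof.
  assert (Hbelow : forall pb pb' l, rf phi q pb -> rf phi q pb' -> pb' = pb ++ l -> l = []).
  { intros p1 p2 l [X [Hq [_ [[s Hs] Hmin]]]] [X' [Hq' [Hp2 [[s' Hs'] _]]]] ->.
    rewrite Hq in Hq'; injection Hq' as <-.
    destruct l as [| x l]; [reflexivity | exfalso].
    apply (Hmin (x :: l) s'); [rewrite Hs', app_assoc; reflexivity | discriminate |].
    exact Hp2. }
  intros H H'.
  destruct (rf_sprefix H) as [t [Ht _]], (rf_sprefix H') as [t' [Ht' _]].
  rewrite Ht in Ht'. destruct (app_eq_app _ _ _ _ Ht') as [l [[-> _] | [-> _]]].
  - rewrite (Hbelow _ _ _ H' H eq_refl), app_nil_r; reflexivity.
  - rewrite (Hbelow _ _ _ H H' eq_refl), app_nil_r; reflexivity.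
Qed.

End Occurrences.

(** * Finiteness of plays *)

Lemma prefixb_length q r : prefixb q r = true -> length q <= length r.
Proof.
  revert r; induction q as [| x q IH]; intros [| y r] H; simpl in *; try lia; try discriminate.
  apply andb_prop in H as [_ H]. specialize (IH r H). lia.
Qed.

Section Game.
Variable G : ordinal_upto.
Variables P L W : Type.
Variable R : W -> W -> Prop.
Variable V : P -> W -> Prop.
Variable phi0 : form P L.

Definition agree_below (p : path) (c c' : clock G) : Prop :=
  forall r, sprefix r p -> c r = c' r.

Lemma agree_below_snoc {p b c c'} : agree_below (p ++ [b]) c c' -> agree_below p c c'.
Proof. intros H r Hr. exact (H r (sprefix_snoc b Hr)). Qed.

Lemma set_clock_at (c : clock G) p g : set_clock c p g p = g.
Proof. unfold set_clock. destruct (list_eq_dec bool_dec p p); congruence. Qed.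

Lemma set_clock_agree (c : clock G) p g : agree_below p (set_clock c p g) c.
Proof.
  intros r Hr. unfold set_clock. destruct (list_eq_dec bool_dec r p) as [-> |]; auto.
  apply sprefix_length in Hr. lia.
Qed.

Lemma reset_clock_above (c : clock G) p g r :
  length r <= length p -> reset_clock phi0 c p g r = set_clock c p g r.
Proof.
  intro Hr. unfold reset_clock.
  destruct (prefixb (p ++ [false]) r) eqn:E; [| reflexivity].
  apply prefixb_length in E. rewrite length_app in E. simpl in E. lia.
Qed.

Lemma reset_clock_at (c : clock G) p g : reset_clock phi0 c p g p = g.
Proof. rewrite reset_clock_above; [apply set_clock_at | lia]. Qed.

Lemma reset_clock_agree (c : clock G) p g : agree_below p (reset_clock phi0 c p g) c.
Proof.
  intros r Hr. rewrite reset_clock_above; [apply set_clock_agree, Hr |].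
  apply sprefix_length in Hr. lia.
Qed.

Definition move (ps ps' : pos G W) : Prop :=
  let (w, p, c) := ps in
  match subf phi0 p with
  | Some (FOr _ _) | Some (FAnd _ _) => exists b, ps' = Pos w (p ++ [b]) c
  | Some (FDia _) | Some (FBox _) => exists v, R w v /\ ps' = Pos v (p ++ [false]) c
  | Some (FMu _ _) | Some (FNu _ _) =>
      exists g, olt G g (top G) /\ ps' = Pos w (p ++ [false]) (set_clock c p g)
  | Some (FVar _) =>
      exists pb g, rf phi0 p pb /\ olt G g (c pb) /\
        ps' = Pos w (pb ++ [false]) (reset_clock phi0 c pb g)
  | _ => False
  end.

Definition successor (ps' ps : pos G W) : Prop := move ps ps'.

Definition acc_at (p : path) (c : clock G) : Prop := forall w, Acc successor (Pos w p c).

(* Finiteness is proved by induction on the subformula at [p]; a variable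
   below [p] whose binder lies strictly above [p] leaves that subtree, so its
   accessibility is assumed, for every clock agreeing with [c] above [p]. *)
Definition outer_vars_acc (p : path) (c : clock G) : Prop :=
  forall q pb c', rf phi0 q pb -> sprefix pb p -> agree_below p c' c -> acc_at q c'.

Lemma outer_vars_acc_plain_child p psi b c :
  subf phi0 p = Some psi -> is_mu_nu (Some psi) = false ->
  outer_vars_acc p c -> outer_vars_acc (p ++ [b]) c.
Proof.
  intros Hp Hplain Hout q pb c' Hrf Hpb Hc'.
  destruct (sprefix_snoc_inv Hpb) as [-> | Hpb'].
  - destruct (rf_shape Hrf) as [X [_ [_ [[a [Ha | Ha]] _]]]];
      rewrite Hp in Ha; injection Ha as ->; discriminate.
  - exact (Hout q pb c' Hrf Hpb' (agree_below_snoc Hc')).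
Qed.

Lemma acc_binder_body p c :
  outer_vars_acc p c ->
  (forall c', outer_vars_acc (p ++ [false]) c' -> acc_at (p ++ [false]) c') ->
  forall g c', agree_below p c' c -> c' p = g -> acc_at (p ++ [false]) c'.
Proof.
  intros Hout Hbody g. induction g as [g IHg] using (well_founded_ind (olt_wf G)).
  intros c' Hc' Hg. apply Hbody. intros q pb c3 Hrf Hpb Hc3.
  destruct (sprefix_snoc_inv Hpb) as [-> | Hpb'].
  - intro w. constructor. intros ps' Hm.
    destruct (rf_shape Hrf) as [X [t [Hq _]]].
    unfold successor, move in Hm; rewrite Hq in Hm.
    destruct Hm as (pb' & h & Hrf' & Hh & ->). rewrite <- (rf_functional Hrf Hrf') in *.
    assert (Hc3p : c3 p = g) by (rewrite <- Hg; exact (Hc3 p (sprefix_snoc_self p false))).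
    rewrite Hc3p in Hh. apply (IHg h Hh); [| apply reset_clock_at].
    intros r Hr. rewrite (reset_clock_agree c3 h Hr), (Hc3 r (sprefix_snoc false Hr)).
    exact (Hc' r Hr).
  - apply (Hout q pb c3 Hrf Hpb').
    intros r Hr. rewrite (Hc3 r (sprefix_snoc false Hr)). exact (Hc' r Hr).
Qed.

Lemma acc_occurrence psi : forall p, subf phi0 p = Some psi ->
  forall c, outer_vars_acc p c -> acc_at p c.
Proof.
  induction psi as [x | x | X | a IHa b IHb | a IHa b IHb | a IHa | a IHa | X a IHa | X a IHa];
    intros p Hp c Hout w; constructor; intros ps' Hm;
    pose proof Hm as Hm'; unfold successor, move in Hm'; rewrite Hp in Hm'.
  3: { destruct Hm' as (pb & _ & Hrf & _).
        exact (Acc_inv (Hout p pb c Hrf (rf_sprefix Hrf) (fun _ _ => eq_refl) w) Hm). }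
  1, 2: contradiction.
  1, 2: destruct Hm' as [[] ->]; [apply IHb | apply IHa];
    try (rewrite (subf_snoc _ Hp); apply subf_nil);
    exact (outer_vars_acc_plain_child _ Hp eq_refl Hout).
  1, 2: destruct Hm' as (v & _ & ->); apply IHa;
    [rewrite (subf_snoc _ Hp); apply subf_nil |];
    exact (outer_vars_acc_plain_child _ Hp eq_refl Hout).
  1, 2: destruct Hm' as (g & _ & ->);
    apply (acc_binder_body Hout) with (g := g); [| apply set_clock_agree | apply set_clock_at];
    apply IHa; rewrite (subf_snoc _ Hp); apply subf_nil.
Qed.

Lemma plays_finite (w : W) (c : clock G) : Acc successor (Pos w [] c).
Proof.
  apply (acc_occurrence (subf_nil phi0)).
  intros q pb c' _ [t [Ht Hne]]. destruct pb, t; simpl in Ht; congruence.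
Qed.

Definition eloise_move (ps : pos G W) (ch : Defs.choice G W) (ps' : pos G W) : Prop :=
  let (w, p, c) := ps in
  match subf phi0 p, ch with
  | Some (FOr _ _), ChLeft _ _ => ps' = Pos w (p ++ [false]) c
  | Some (FOr _ _), ChRight _ _ => ps' = Pos w (p ++ [true]) c
  | Some (FDia _), ChWorld _ v => R w v /\ ps' = Pos v (p ++ [false]) c
  | Some (FMu _ _), ChOrd _ _ g =>
      olt G g (top G) /\ ps' = Pos w (p ++ [false]) (set_clock c p g)
  | Some (FVar _), ChOrd _ _ g =>
      exists pb X a, rf phi0 p pb /\ subf phi0 pb = Some (FMu X a) /\ olt G g (c pb) /\
        ps' = Pos w (pb ++ [false]) (reset_clock phi0 c pb g)
  | _, _ => False
  end.

Lemma eloise_move_move {ps ch ps'} : eloise_move ps ch ps' -> move ps ps'.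
Proof.
  destruct ps as [w p c]; unfold eloise_move, move.
  destruct (subf phi0 p) as [[] |]; destruct ch; try contradiction.
  - intros (pb & X & a & Hrf & _ & Hg & ->). exists pb, g. auto.
  - intros ->. exists false. reflexivity.
  - intros ->. exists true. reflexivity.
  - intros [Hv ->]. exists v. auto.
  - intros [Hg ->]. exists g. auto.
Qed.

Lemma win_eloise_move sigma ps ch ps' :
  sigma ps = Some ch -> eloise_move ps ch ps' ->
  win R V phi0 sigma ps' -> win R V phi0 sigma ps.
Proof.
  destruct ps as [w p c]; unfold eloise_move.
  destruct (subf phi0 p) as [[] |] eqn:Hp; destruct ch; try contradiction;
    intros Hsigma Hmove Hwin.
  - destruct Hmove as (pb & X & a & Hrf & Hpb & Hg & ->). eapply win_var_mu; eauto.
  - subst ps'. eapply win_or_l; eauto.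
  - subst ps'. eapply win_or_r; eauto.
  - destruct Hmove as [Hv ->]. eapply win_dia; eauto.
  - destruct Hmove as [Hg ->]. eapply win_mu; eauto.
Qed.

End Game.

(** * Truth of positions *)

Section Correspondence.
Variable G : ordinal_upto.
Variables P L W : Type.
Variable R : W -> W -> Prop.
Variable V : P -> W -> Prop.
Variable phi0 : form P L.
Variable s0 : L -> W -> Prop.

Definition env_at (p : path) (c : clock G) : L -> W -> Prop := occ_env G R V phi0 p c s0.

Definition pos_holds (ps : pos G W) : Prop :=
  let (w, p, c) := ps in
  match subf phi0 p with
  | Some psi => sem G R V psi (env_at p c) w
  | None => False
  end.

Lemma pos_holds_occ {p psi} c w :
  subf phi0 p = Some psi -> pos_holds (Pos w p c) <-> sem G R V psi (env_at p c) w.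
Proof. intro Hp. unfold pos_holds. rewrite Hp. reflexivity. Qed.

Lemma pos_holds_root w c : pos_holds (Pos w [] c) <-> sem G R V phi0 s0 w.
Proof. exact (pos_holds_occ c w (subf_nil phi0)). Qed.

Lemma env_at_agree {p c c'} : agree_below p c c' -> env_at p c = env_at p c'.
Proof. apply occ_env_agree. Qed.

Lemma pos_holds_plain_child {p psi} b {chi} c w :
  subf phi0 p = Some psi -> is_mu_nu (Some psi) = false -> subf psi [b] = Some chi ->
  pos_holds (Pos w (p ++ [b]) c) <-> sem G R V chi (env_at p c) w.
Proof.
  intros Hp Hplain Hchi. unfold pos_holds, env_at.
  rewrite (subf_snoc b Hp), Hchi. erewrite occ_env_snoc by exact Hp.
  destruct psi; try discriminate; reflexivity.
Qed.

Lemma pos_holds_or {p a b} c w : subf phi0 p = Some (FOr a b) ->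
  pos_holds (Pos w p c) <->
  pos_holds (Pos w (p ++ [false]) c) \/ pos_holds (Pos w (p ++ [true]) c).
Proof.
  intro Hp. rewrite (pos_holds_plain_child false _ _ Hp eq_refl (subf_nil a)),
    (pos_holds_plain_child true _ _ Hp eq_refl (subf_nil b)).
  rewrite (pos_holds_occ c w Hp); reflexivity.
Qed.

Lemma pos_holds_and {p a b} c w : subf phi0 p = Some (FAnd a b) ->
  pos_holds (Pos w p c) <->
  pos_holds (Pos w (p ++ [false]) c) /\ pos_holds (Pos w (p ++ [true]) c).
Proof.
  intro Hp. rewrite (pos_holds_plain_child false _ _ Hp eq_refl (subf_nil a)),
    (pos_holds_plain_child true _ _ Hp eq_refl (subf_nil b)).
  rewrite (pos_holds_occ c w Hp); reflexivity.
Qed.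

Lemma pos_holds_dia {p a} c w : subf phi0 p = Some (FDia a) ->
  pos_holds (Pos w p c) <-> exists v, R w v /\ pos_holds (Pos v (p ++ [false]) c).
Proof.
  intro Hp. setoid_rewrite (pos_holds_plain_child false _ _ Hp eq_refl (subf_nil a)).
  rewrite (pos_holds_occ c w Hp); reflexivity.
Qed.

Lemma pos_holds_box {p a} c w : subf phi0 p = Some (FBox a) ->
  pos_holds (Pos w p c) <-> forall v, R w v -> pos_holds (Pos v (p ++ [false]) c).
Proof.
  intro Hp. setoid_rewrite (pos_holds_plain_child false _ _ Hp eq_refl (subf_nil a)).
  rewrite (pos_holds_occ c w Hp); reflexivity.
Qed.

Lemma env_at_mu_child {p X a} c : subf phi0 p = Some (FMu X a) ->
  env_at (p ++ [false]) c = upd (env_at p c) X (iter_mu G (body G R V (env_at p c) X a) (c p)).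
Proof.
  intro Hp. unfold env_at. erewrite occ_env_snoc by exact Hp.
  simpl. rewrite app_nil_r. reflexivity.
Qed.

Lemma env_at_nu_child {p X a} c : subf phi0 p = Some (FNu X a) ->
  env_at (p ++ [false]) c = upd (env_at p c) X (iter_nu G (body G R V (env_at p c) X a) (c p)).
Proof.
  intro Hp. unfold env_at. erewrite occ_env_snoc by exact Hp.
  simpl. rewrite app_nil_r. reflexivity.
Qed.

Lemma pos_holds_mu_body {p X a c c'} w : subf phi0 p = Some (FMu X a) -> agree_below p c' c ->
  pos_holds (Pos w (p ++ [false]) c') <->
  body G R V (env_at p c) X a (iter_mu G (body G R V (env_at p c) X a) (c' p)) w.
Proof.
  intros Hp Hc. unfold pos_holds. rewrite (subf_snoc false Hp). simpl. rewrite subf_nil.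
  rewrite (env_at_mu_child _ Hp), (env_at_agree Hc). reflexivity.
Qed.

Lemma pos_holds_nu_body {p X a c c'} w : subf phi0 p = Some (FNu X a) -> agree_below p c' c ->
  pos_holds (Pos w (p ++ [false]) c') <->
  body G R V (env_at p c) X a (iter_nu G (body G R V (env_at p c) X a) (c' p)) w.
Proof.
  intros Hp Hc. unfold pos_holds. rewrite (subf_snoc false Hp). simpl. rewrite subf_nil.
  rewrite (env_at_nu_child _ Hp), (env_at_agree Hc). reflexivity.
Qed.

Lemma pos_holds_mu {p X a} c w : subf phi0 p = Some (FMu X a) ->
  pos_holds (Pos w p c) <->
  exists g, olt G g (top G) /\ pos_holds (Pos w (p ++ [false]) (set_clock c p g)).
Proof.
  intro Hp. setoid_rewrite (fun g => pos_holds_mu_body _ Hp (set_clock_agree c (p := p) g)).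
  setoid_rewrite set_clock_at.
  unfold pos_holds at 1; rewrite Hp. apply (iter_mu_char G (body_monotone G R V _ X a)).
Qed.

Lemma pos_holds_nu {p X a} c w : subf phi0 p = Some (FNu X a) ->
  pos_holds (Pos w p c) <->
  forall g, olt G g (top G) -> pos_holds (Pos w (p ++ [false]) (set_clock c p g)).
Proof.
  intro Hp. setoid_rewrite (fun g => pos_holds_nu_body _ Hp (set_clock_agree c (p := p) g)).
  setoid_rewrite set_clock_at.
  unfold pos_holds at 1; rewrite Hp. apply (iter_nu_char G (body_monotone G R V _ X a)).
Qed.

Lemma pos_holds_var {p pb X} c w : rf phi0 p pb -> binds phi0 pb X ->
  pos_holds (Pos w p c) <-> env_at (pb ++ [false]) c X w.
Proof.
  intros Hrf HX. destruct (rf_shape Hrf) as [Y [t [Hp [HY [-> Hfree]]]]].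
  assert (Y = X) as ->.
  { destruct HY as [? [E | E]], HX as [? [E' | E']]; rewrite E in E'; congruence. }
  unfold pos_holds; rewrite Hp. simpl. unfold env_at.
  replace (pb ++ false :: t) with ((pb ++ [false]) ++ t)
    by (rewrite <- app_assoc; reflexivity).
  apply occ_env_skip; [| intros t1 Ht1]; rewrite <- app_assoc; cbn [app];
    [rewrite Hp; discriminate | exact (Hfree t1 Ht1)].
Qed.

Lemma pos_holds_var_mu {p pb X a} c w : rf phi0 p pb -> subf phi0 pb = Some (FMu X a) ->
  pos_holds (Pos w p c) <->
  exists g, olt G g (c pb) /\ pos_holds (Pos w (pb ++ [false]) (reset_clock phi0 c pb g)).
Proof.
  intros Hrf Hpb.
  rewrite (pos_holds_var c w Hrf (ex_intro _ a (or_introl Hpb))),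
    (env_at_mu_child c Hpb), upd_eq.
  setoid_rewrite (fun g => pos_holds_mu_body _ Hpb (reset_clock_agree phi0 c (p := pb) g)).
  setoid_rewrite reset_clock_at.
  apply (iter_mu_char G (body_monotone G R V _ X a)).
Qed.

Lemma pos_holds_var_nu {p pb X a} c w : rf phi0 p pb -> subf phi0 pb = Some (FNu X a) ->
  pos_holds (Pos w p c) <->
  forall g, olt G g (c pb) -> pos_holds (Pos w (pb ++ [false]) (reset_clock phi0 c pb g)).
Proof.
  intros Hrf Hpb.
  rewrite (pos_holds_var c w Hrf (ex_intro _ a (or_intror Hpb))),
    (env_at_nu_child c Hpb), upd_eq.
  setoid_rewrite (fun g => pos_holds_nu_body _ Hpb (reset_clock_agree phi0 c (p := pb) g)).
  setoid_rewrite reset_clock_at.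
  apply (iter_nu_char G (body_monotone G R V _ X a)).
Qed.

Lemma win_pos_holds sigma ps : win R V phi0 sigma ps -> pos_holds ps.
Proof.
  induction 1.
  - apply (pos_holds_occ c w H); exact H0.
  - apply (pos_holds_occ c w H); exact H0.
  - apply (pos_holds_or _ _ H); auto.
  - apply (pos_holds_or _ _ H); auto.
  - apply (pos_holds_and _ _ H); auto.
  - apply (pos_holds_dia _ _ H); eauto.
  - apply (pos_holds_box _ _ H); auto.
  - apply (pos_holds_mu _ _ H); eauto.
  - apply (pos_holds_nu _ _ H); auto.
  - apply (pos_holds_var_mu _ _ H H0); eauto.
  - apply (pos_holds_var_nu _ _ H H0); auto.
Qed.

Definition good_choice (ps : pos G W) (ch : Defs.choice G W) : Prop :=
  exists ps', eloise_move R phi0 ps ch ps' /\ pos_holds ps'.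

Definition truth_strategy : strategy G W := fun ps =>
  match excluded_middle_informative (exists ch, good_choice ps ch) with
  | left H => Some (proj1_sig (constructive_indefinite_description _ H))
  | right _ => None
  end.

Lemma truth_strategy_good ps ch :
  good_choice ps ch -> exists ch', truth_strategy ps = Some ch' /\ good_choice ps ch'.
Proof.
  intro H. unfold truth_strategy.
  destruct (excluded_middle_informative _) as [Hex | Hno]; [| exfalso; eauto].
  destruct (constructive_indefinite_description _ Hex) as [ch' Hch']. eauto.
Qed.

Lemma win_by_good_choice ps ch ps' :
  (forall ps'', move R phi0 ps ps'' -> pos_holds ps'' -> win R V phi0 truth_strategy ps'') ->
  eloise_move R phi0 ps ch ps' -> pos_holds ps' -> win R V phi0 truth_strategy ps.
Proof.
  intros IH Hmove Hholds.
  destruct (truth_strategy_good (ex_intro _ ps' (conj Hmove Hholds)))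
    as [ch' [Hsigma [ps'' [Hmove' Hholds']]]].
  apply (win_eloise_move ps Hsigma Hmove'), IH; [| exact Hholds'].
  exact (eloise_move_move _ _ Hmove').
Qed.

Lemma pos_holds_win (Hsent : sentence phi0) ps :
  Acc (successor R phi0) ps -> pos_holds ps -> win R V phi0 truth_strategy ps.
Proof.
  induction 1 as [[w p c] _ IH]; intro Hholds.
  assert (Hgood : forall ch ps', pos_holds ps' -> eloise_move R phi0 (Pos w p c) ch ps' ->
    win R V phi0 truth_strategy (Pos w p c)) by (intros; eapply win_by_good_choice; eauto).
  destruct (subf phi0 p) as [psi |] eqn:Hp;
    [| unfold pos_holds in Hholds; rewrite Hp in Hholds; contradiction].
  destruct psi.
  - eapply win_prop; [exact Hp |]. exact (proj1 (pos_holds_occ c w Hp) Hholds).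
  - eapply win_nprop; [exact Hp |]. exact (proj1 (pos_holds_occ c w Hp) Hholds).
  - destruct (sentence_var_rf p Hsent Hp) as [pb Hrf].
    destruct (rf_shape Hrf) as (X & _ & _ & [a [Hpb | Hpb]] & _).
    + apply (pos_holds_var_mu c w Hrf Hpb) in Hholds as [g [Hg Hholds]].
      apply (Hgood (ChOrd G W g) _ Hholds); simpl; rewrite Hp; eauto 8.
    + eapply win_var_nu; [exact Hrf | exact Hpb |]. intros g Hg.
      apply IH; [simpl; rewrite Hp; eauto |].
      exact (proj1 (pos_holds_var_nu c w Hrf Hpb) Hholds g Hg).
  - apply (pos_holds_or c w Hp) in Hholds as [Hholds | Hholds];
      [apply (Hgood (ChLeft G W) _ Hholds) | apply (Hgood (ChRight G W) _ Hholds)];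
      simpl; rewrite Hp; reflexivity.
  - apply (pos_holds_and c w Hp) in Hholds as [Hl Hr].
    eapply win_and; [exact Hp | apply IH | apply IH];
      solve [simpl; rewrite Hp; eauto | assumption].
  - apply (pos_holds_dia c w Hp) in Hholds as [v [Hv Hholds]].
    apply (Hgood (ChWorld G v) _ Hholds); simpl; rewrite Hp; auto.
  - eapply win_box; [exact Hp |]. intros v Hv.
    apply IH; [simpl; rewrite Hp; eauto | exact (proj1 (pos_holds_box c w Hp) Hholds v Hv)].
  - apply (pos_holds_mu c w Hp) in Hholds as [g [Hg Hholds]].
    apply (Hgood (ChOrd G W g) _ Hholds); simpl; rewrite Hp; auto.
  - eapply win_nu; [exact Hp |]. intros g Hg.
    apply IH; [simpl; rewrite Hp; eauto | exact (proj1 (pos_holds_nu c w Hp) Hholds g Hg)].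
Qed.

End Correspondence.

Theorem mainTheorem3 (G : ordinal_upto) (G_pos : exists a, olt G a (top G))
  (P L W : Type) (R : W -> W -> Prop) (V : P -> W -> Prop)
  (w0 : W) (phi0 : form P L)
  (Hsent : sentence phi0) (Hnf : normal_form phi0) :
  sem_holds G R V phi0 w0 <-> game_holds G R V phi0 w0.
Proof.
  split.
  - intro Hsem. set (s0 := fun (_ : L) (_ : W) => False).
    exists (truth_strategy R V phi0 s0).
    apply (pos_holds_win V s0 Hsent (plays_finite R phi0 w0 (fun _ => top G))).
    apply pos_holds_root, Hsem.
  - intros [sigma Hwin] s. apply (pos_holds_root R V phi0 s w0 (fun _ => top G)).
    exact (win_pos_holds s Hwin).
Qed.
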